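(* For any metrized graph $\Gamma$ with $v$ vertices and any vertex $p\in V(\Gamma)$, $$4Kf(\Gamma)=v \cdot \sum_{e_i \in E(\Gamma)}\frac{L_i(R_{a_i,p}-R_{b_i,p})^2}{(L_i+R_i)^2} + \sum_{e_i \in E(\Gamma)}\frac{R_i}{L_i + R_i} \sum_{w \in V(\Gamma)}\big(r(p_i,w)+r(q_i,w)\big),$$ where $p_i,q_i$ denote the end points of $e_i$.
   Context: A metrized graph $\Gamma$ is a finite connected graph (multiple edges and self-loops allowed) each of whose edges is identified with a closed segment of positive length, with a finite nonempty vertex set $V(\Gamma)$ containing every point of valence $\neq2$; $v=\#V(\Gamma)$, $L_i$ the length of $e_i$, $r$ the effective resistance (edges as resistors of resistance equal to length). $Kf(\Gamma)=\frac12\sum_{p,q\in V(\Gamma)}r(p,q)$. For an edge $e_i$: if $\Gamma-e_i$ (interior deleted) is connected, $R_i$ is the effective resistance between $p_i,q_i$ in $\Gamma-e_i$, $R_{a_i,p}=\hat j_{p_i}(p,q_i)$, $R_{b_i,p}=\hat j_{q_i}(p,p_i)$ with $\hat j_z(x,y)$ the voltage function of $\Gamma-e_i$ (potential at $x$ when unit current enters at $y$ and exits at $z$, potential $0$ at $z$); if $e_i$ is a bridge, $R_{a_i,p}=0,R_{b_i,p}=R_i$ for $p$ in the component of $\Gamma-e_i$ containing $p_i$ and $R_{a_i,p}=R_i,R_{b_i,p}=0$ otherwise, with every expression in $R_i$ interpreted as its limit as $R_i\to\infty$; for a self-loop $R_i=0$. *)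

From HB Require Import structures.
From mathcomp Require Import all_boot all_order all_algebra.
From mathcomp Require Import all_classical all_reals all_analysis.
From Stdlib Require Import ClassicalEpsilon.
Set Implicit Arguments. Unset Strict Implicit. Unset Printing Implicit Defensive.
Import Order.TTheory GRing.Theory Num.Theory numFieldNormedType.Exports.
Local Open Scope ring_scope.

(* A metrized graph given by a combinatorial model: vertex set V = 'I_n,
   edges e_i (i : 'I_m) with end points p_i = eP G i, q_i = eQ G i
   (multiple edges and self-loops allowed) and lengths L_i = len G i. *)
Record mgraph (R : realType) (n m : nat) := MGraph {
  eP : 'I_m -> 'I_n ;
  eQ : 'I_m -> 'I_n ;
  len : 'I_m -> R }.

Section Defs.
Variables (R : realType) (n m : nat) (G : mgraph R n m).

Definition adj (keep : pred 'I_m) : rel 'I_n :=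
  fun x y => [exists j, keep j &&
     (((eP G j == x) && (eQ G j == y)) || ((eP G j == y) && (eQ G j == x)))].

Definition connectedb (keep : pred 'I_m) : Prop :=
  forall x y : 'I_n, connect (adj keep) x y.

Definition allE : pred 'I_m := predT.
Definition delE (i : 'I_m) : pred 'I_m := fun j => j != i.

(* net current leaving vertex x for potential u, in the subnetwork keep
   (edge e_j is a resistor of resistance len j) *)
Definition outcurrent (keep : pred 'I_m) (u : 'I_n -> R) (x : 'I_n) : R :=
  \sum_(j < m | keep j)
     (((eP G j == x)%:R * (u (eP G j) - u (eQ G j))
      + (eQ G j == x)%:R * (u (eQ G j) - u (eP G j))) / len G j).

Definition is_voltage (keep : pred 'I_m) (z y : 'I_n) (u : 'I_n -> R) : Prop :=
  u z = 0 /\ forall x, outcurrent keep u x = (x == y)%:R - (x == z)%:R.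

Definition jhat (keep : pred 'I_m) (z x y : 'I_n) : R :=
  epsilon (inhabits (fun _ : 'I_n => 0 : R)) (is_voltage keep z y) x.

Definition resist (keep : pred 'I_m) (x y : 'I_n) : R := jhat keep y x x.

Definition r (x y : 'I_n) : R := resist allE x y.

Definition Kf : R := 2^-1 * \sum_(x < n) \sum_(y < n) r x y.

(* R_i, R_{a_i,p}, R_{b_i,p} when Gamma - e_i is connected *)
Definition Ri (i : 'I_m) : R := resist (delE i) (eP G i) (eQ G i).
Definition Ra (i : 'I_m) (p : 'I_n) : R := jhat (delE i) (eP G i) p (eQ G i).
Definition Rb (i : 'I_m) (p : 'I_n) : R := jhat (delE i) (eQ G i) p (eP G i).

(* bridge case: R_i = t, with R_a, R_b depending on the component of p *)
Definition Ra_br (i : 'I_m) (p : 'I_n) (t : R) : R :=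
  if connect (adj (delE i)) (eP G i) p then 0 else t.
Definition Rb_br (i : 'I_m) (p : 'I_n) (t : R) : R :=
  if connect (adj (delE i)) (eP G i) p then t else 0.

(* L_i (R_{a_i,p} - R_{b_i,p})^2 / (L_i + R_i)^2, with limit R_i -> oo for bridges *)
Definition term1 (i : 'I_m) (p : 'I_n) : R :=
  if `[< connectedb (delE i) >] then
    len G i * (Ra i p - Rb i p) ^+ 2 / (len G i + Ri i) ^+ 2
  else
    lim ((fun t : R => len G i * (Ra_br i p t - Rb_br i p t) ^+ 2
                       / (len G i + t) ^+ 2) @ +oo)%classic.

(* R_i / (L_i + R_i), with limit R_i -> oo for bridges *)
Definition coef (i : 'I_m) : R :=
  if `[< connectedb (delE i) >] then Ri i / (len G i + Ri i)
  else lim ((fun t : R => t / (len G i + t)) @ +oo)%classic.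

End Defs.

(* Let g be the Green's function of the network: g y is the potential of a unit
   current entering at y and leaving uniformly through all n vertices,
   normalized to mean zero.  It is symmetric, r(x,y) = g(x,x) + g(y,y) - 2 g(x,y),
   and hence 4 Kf = 4 n (sum_z g(z,z)).  For every edge e_i, bridge or not, the
   quantities R_i/(L_i+R_i) and L_i (R_{a_i,p} - R_{b_i,p})^2/(L_i+R_i)^2 only
   depend on the potential phi of a unit current from p_i to q_i in the whole
   graph: they equal (phi p_i - phi q_i)/L_i and (2 phi p - phi p_i - phi q_i)^2/L_i.
   With phi = g p_i - g q_i, both sums over edges become Dirichlet forms of g,
   which Green's identity evaluates. *)

From HB Require Import structures.
From mathcomp Require Import all_boot all_order all_algebra.
From mathcomp Require Import all_classical all_reals all_analysis.
From mathcomp Require Import ring lra zify.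
From Stdlib Require Import ClassicalEpsilon.
Set Implicit Arguments. Unset Strict Implicit. Unset Printing Implicit Defensive.
Import Order.TTheory GRing.Theory Num.Theory numFieldNormedType.Exports.
Local Open Scope ring_scope.

Lemma sumr_delta {R : nzRingType} {I : finType} (F : I -> R) (y : I) :
  \sum_x (x == y)%:R * F x = F y.
Proof.
rewrite (bigD1 y) //= eqxx mul1r big1 ?addr0 // => x /negbTE ->.
by rewrite mul0r.
Qed.

Lemma sumr_const_ord {R : nzRingType} n (c : R) : \sum_(x < n) c = n%:R * c.
Proof. by rewrite sumr_const card_ord mulr_natl. Qed.

Lemma sum_delta {R : nzRingType} {I : finType} (y : I) : \sum_x ((x == y)%:R : R) = 1.
Proof. by rewrite -[RHS](sumr_delta (fun=> 1) y); under [RHS]eq_bigr do rewrite mulr1. Qed.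

Lemma natr_ord_neq0 {R : numDomainType} {n} (y : 'I_n) : n%:R != 0 :> R.
Proof. by rewrite pnatr_eq0 -lt0n (leq_ltn_trans _ (ltn_ord y)). Qed.

Section Limits.
Variables (R : realType) (L : R).
Hypothesis L_gt0 : 0 < L.

Lemma cvg_ratio_pinfty : ((fun t : R => t / (L + t)) @ +oo --> (1 : R))%classic.
Proof.
apply/cvgrPdist_lt => e e0.
apply: filterS (nbhs_pinfty_gt (num_real (L / e))) => t Ht.
have t0 : 0 < t by apply: lt_trans Ht; exact: divr_gt0.
have Lt0 : 0 < L + t by exact: addr_gt0.
have -> : 1 - t / (L + t) = L / (L + t) by field; rewrite gt_eqF.
rewrite ger0_norm ?divr_ge0 ?ltW // ltr_pdivrMr // -ltr_pdivrMl // mulrC.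
by apply: lt_le_trans Ht _; rewrite lerDr ltW.
Qed.

Lemma lim_ratio_pinfty : lim ((fun t : R => t / (L + t)) @ +oo)%classic = 1.
Proof. exact: cvg_lim cvg_ratio_pinfty. Qed.

Lemma lim_sqr_ratio_pinfty :
  lim ((fun t : R => L * (t / (L + t)) ^+ 2) @ +oo)%classic = L.
Proof.
apply: cvg_lim => //.
under eq_fun do rewrite expr2.
have := cvgM (cvg_cst L) (cvgM cvg_ratio_pinfty cvg_ratio_pinfty).
by rewrite !mulr1; apply.
Qed.

End Limits.

Section Network.
Variables (R : realType) (n m : nat) (G : mgraph R n m).

Local Notation a j := (eP G j).
Local Notation b j := (eQ G j).

Definition dirichlet (keep : pred 'I_m) (u v : 'I_n -> R) : R :=
  \sum_(j < m | keep j) (u (a j) - u (b j)) * (v (a j) - v (b j)) / len G j.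

Lemma dirichlet_cstr keep u c : dirichlet keep u (fun=> c) = 0.
Proof. by apply: big1 => j _; rewrite subrr mulr0 mul0r. Qed.

Lemma outcurrentE keep u x : outcurrent G keep u x =
  \sum_(j < m | keep j)
    ((x == a j)%:R - (x == b j)%:R) * (u (a j) - u (b j)) / len G j.
Proof. by apply: eq_bigr => j _; rewrite ![_ == x]eq_sym; congr (_ / _); ring. Qed.

Lemma outcurrentDl keep u v (k l : R) x :
  outcurrent G keep (fun z => k * u z + l * v z) x =
  k * outcurrent G keep u x + l * outcurrent G keep v x.
Proof. by rewrite !outcurrentE !mulr_sumr -big_split /=; apply: eq_bigr => j _; ring. Qed.

Lemma outcurrent_addr keep u c x :
  outcurrent G keep (fun z => u z + c) x = outcurrent G keep u x.
Proof. by rewrite !outcurrentE; apply: eq_bigr => j _; congr (_ / _); ring. Qed.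

Lemma sum_outcurrent_mul keep (U : 'I_n -> 'I_n -> R) (h : 'I_n -> R) :
  \sum_x outcurrent G keep (U x) x * h x =
  \sum_(j < m | keep j) ((U (a j) (a j) - U (a j) (b j)) * h (a j)
                       - (U (b j) (a j) - U (b j) (b j)) * h (b j)) / len G j.
Proof.
under eq_bigr do rewrite outcurrentE mulr_suml.
rewrite exchange_big /=; apply: eq_bigr => j _.
under eq_bigr do rewrite -!mulrA mulrBl.
by rewrite sumrB !sumr_delta; ring.
Qed.

Lemma green_identity keep u v :
  \sum_x outcurrent G keep u x * v x = dirichlet keep u v.
Proof.
rewrite (sum_outcurrent_mul keep (fun=> u)); apply: eq_bigr => j _.
by congr (_ / _); ring.
Qed.

Lemma sum_outcurrent keep u : \sum_x outcurrent G keep u x = 0.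
Proof.
under eq_bigr do rewrite -[outcurrent _ _ _ _]mulr1.
rewrite (green_identity keep u (fun=> 1)).
by apply: big1 => j _; rewrite subrr mulr0 mul0r.
Qed.

Lemma outcurrent_delE i u x : outcurrent G (@allE m) u x =
  outcurrent G (delE i) u x +
  ((x == a i)%:R - (x == b i)%:R) * (u (a i) - u (b i)) / len G i.
Proof. by rewrite !outcurrentE (bigD1 i) //= addrC. Qed.

Lemma adj_sym keep : symmetric (adj G keep).
Proof.
suff H x y : adj G keep x y -> adj G keep y x by move=> x y; apply/idP/idP; apply: H.
by case/existsP=> j /andP [kj h]; apply/existsP; exists j; rewrite kj orbC.
Qed.

Hypothesis len_gt0 : forall j, 0 < len G j.

Lemma dirichlet_ge0 keep u : 0 <= dirichlet keep u u.
Proof. by apply: sumr_ge0 => j _; apply: divr_ge0; [rewrite -expr2 sqr_ge0 | exact: ltW]. Qed.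

Lemma dirichlet_eq0 keep u : dirichlet keep u u = 0 ->
  forall j, keep j -> u (a j) = u (b j).
Proof.
move=> /psumr_eq0P H j kj; apply/eqP; rewrite -subr_eq0 -sqrf_eq0 expr2.
have /eqP := H (fun j _ => divr_ge0 (sqr_ge0 _) (ltW (len_gt0 j))) j kj.
by rewrite -expr2 mulf_eq0 invr_eq0 (gt_eqF (len_gt0 j)) orbF expr2.
Qed.

Lemma harmonic_const keep : connectedb G keep -> forall u,
  (forall x, outcurrent G keep u x = 0) -> forall x y, u x = u y.
Proof.
move=> hc u harm.
have u_edge : forall j, keep j -> u (a j) = u (b j).
  by apply: dirichlet_eq0; rewrite -green_identity big1 // => x _; rewrite harm mul0r.
have u_adj x y : adj G keep x y -> u x = u y.
  by case/existsP=> j /andP [/u_edge uj /orP [] /andP [/eqP <- /eqP <-]].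
move=> x y; have /connectP [s pth ->] := hc x y.
by elim: s x pth => [|z s IH] x //= /andP [/u_adj -> /IH].
Qed.

Lemma harmonic_diff keep : connectedb G keep -> forall u v,
  (forall x, outcurrent G keep u x = outcurrent G keep v x) ->
  forall x y, u x - v x = u y - v y.
Proof.
move=> hc u v huv x y.
have harm z : outcurrent G keep (fun z => 1 * u z + (-1) * v z) z = 0.
  by rewrite outcurrentDl huv; ring.
by have := harmonic_const hc harm x y; rewrite !mul1r !mulN1r.
Qed.

Definition laplacian keep : 'M[R]_n :=
  \matrix_(y, x) outcurrent G keep (fun z => (z == y)%:R) x.

Lemma mul_laplacian keep (v : 'rV[R]_n) x :
  (v *m laplacian keep) 0 x = outcurrent G keep (v 0) x.
Proof.
rewrite !mxE outcurrentE.
under eq_bigr do rewrite mxE outcurrentE mulr_sumr.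
rewrite exchange_big /=; apply: eq_bigr => j _.
pose d := ((x == a j)%:R - (x == b j)%:R) / len G j.
rewrite (eq_bigr (fun y => (y == a j)%:R * (v 0 y * d) - (y == b j)%:R * (v 0 y * d))).
  by rewrite sumrB !sumr_delta /d; ring.
by move=> y _; rewrite /d ![y == _]eq_sym; ring.
Qed.

Lemma laplacian_ker keep : connectedb G keep ->
  (kermx (laplacian keep) <= (const_mx 1 : 'rV[R]_n))%MS.
Proof.
move=> hc; apply/row_subP => k.
have : row k (kermx (laplacian keep)) *m laplacian keep = 0.
  by rewrite -row_mul mulmx_ker row0.
move: (row k _) => v hv.
have {}hv x : outcurrent G keep (v 0) x = 0 by rewrite -mul_laplacian hv mxE.
have [x0 _ | no_x] := pickP (@predT 'I_n); last first.
  have -> : v = 0 by apply/rowP => z; have := no_x z.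
  exact: sub0mx.
have -> : v = v 0 x0 *: const_mx 1.
  by apply/rowP => z; rewrite !mxE mulr1; apply: harmonic_const hv z x0.
exact: scalemx_sub.
Qed.

Lemma outcurrent_onto keep : connectedb G keep -> forall f : 'I_n -> R,
  \sum_x f x = 0 -> exists u, forall x, outcurrent G keep u x = f x.
Proof.
move=> hc f f0.
have [x0 _ | no_x] := pickP (@predT 'I_n); last first.
  by exists f => x; have := no_x x.
pose K := kermx (const_mx 1 : 'M[R]_(n, 1)).
have rankK : \rank K = n.-1.
  rewrite mxrank_ker -subn1; congr (_ - _)%N; apply/eqP.
  rewrite eqn_leq rank_leq_col lt0n mxrank_eq0; apply/eqP => /matrixP/(_ x0 0).
  by rewrite !mxE => /eqP; rewrite oner_eq0.
have LK : (laplacian keep <= K)%MS.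
  apply/sub_kermxP/matrixP => y k; rewrite !mxE.
  under eq_bigr do rewrite !mxE mulr1.
  exact: sum_outcurrent.
have KL : (K <= laplacian keep)%MS.
  have rank_ker : (n - \rank (laplacian keep) <= 1)%N.
    by rewrite -mxrank_ker (leq_trans (mxrankS (laplacian_ker hc))) ?rank_leq_row.
  case: (mxrank_leqif_sup LK) => le <-; rewrite eqn_leq le rankK /=.
  have := rank_leq_row (laplacian keep); lia.
have fK : (\row_x f x <= K)%MS.
  apply/sub_kermxP/matrixP => i k; rewrite !mxE.
  by under eq_bigr do rewrite !mxE mulr1.
have /submxP [D hD] := submx_trans fK KL.
by exists (D 0) => x; rewrite -mul_laplacian -hD mxE.
Qed.

Lemma jhat_voltage keep : connectedb G keep -> forall z y,
  is_voltage G keep z y (fun x => jhat G keep z x y).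
Proof.
move=> hc z y; apply: (epsilon_spec _ (is_voltage G keep z y)).
have [u hu] : exists u, forall x,
    outcurrent G keep u x = (x == y)%:R - (x == z)%:R.
  by apply: outcurrent_onto hc _ _; rewrite sumrB !sum_delta subrr.
exists (fun x => u x - u z); split; first exact: subrr.
by move=> x; rewrite outcurrent_addr.
Qed.

Lemma connectedb_delE i : connectedb G (@allE m) ->
  connect (adj G (delE i)) (a i) (b i) -> connectedb G (delE i).
Proof.
move=> hc hab x y; apply: connect_sub (hc x y) => u v /existsP [j /andP [_ hj]].
move: hj; have [-> | ji] := eqVneq j i => hj; last first.
  by apply: connect1; apply/existsP; exists j; rewrite /delE ji.
by case/orP: hj => /andP [/eqP <- /eqP <-]; rewrite // (sym_connect_sym (@adj_sym _)).
Qed.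

Section Voltage.
Variables (keep : pred 'I_m) (z y : 'I_n).
Hypothesis keep_conn : connectedb G keep.

Lemma jhat_addC x : jhat G keep z x y + jhat G keep y x z = resist G keep z y.
Proof.
have [u0 hu] := jhat_voltage keep_conn z y.
have [w0 hw] := jhat_voltage keep_conn y z.
pose s x := 1 * jhat G keep z x y + 1 * jhat G keep y x z.
have harm x' : outcurrent G keep s x' = 0 by rewrite outcurrentDl hu hw; ring.
have := harmonic_const keep_conn harm x z.
by rewrite /s /resist u0 !mul1r add0r.
Qed.

Lemma jhat_source : jhat G keep z y y = resist G keep z y.
Proof.
have [w0 _] := jhat_voltage keep_conn y z.
by rewrite -(jhat_addC y) w0 addr0.
Qed.

Lemma resist_ge0 : 0 <= resist G keep z y.
Proof.
have [u0 hu] := jhat_voltage keep_conn y z.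
have := green_identity keep (fun x => jhat G keep y x z) (fun x => jhat G keep y x z).
under eq_bigr do rewrite hu mulrBl.
rewrite sumrB !sumr_delta u0 subr0 /resist => ->.
exact: dirichlet_ge0.
Qed.

End Voltage.

Section EdgeTerms.
Variables (i : 'I_m) (phi : 'I_n -> R).
Hypothesis all_conn : connectedb G (@allE m).
Hypothesis phi_current :
  forall x, outcurrent G (@allE m) phi x = (x == a i)%:R - (x == b i)%:R.

Section NonBridge.
Hypothesis del_conn : connectedb G (delE i).

Let k := 1 + Ri G i / len G i.

(* In G, the voltage u of G - e_i also drives the current R_i / L_i through
   e_i, so u is k times the potential of a unit current from a_i to b_i. *)
Lemma jhat_delE_potential x : jhat G (delE i) (a i) x (b i) = k * (phi (a i) - phi x).
Proof.
have [u0 hu] := jhat_voltage del_conn (a i) (b i).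
pose s x := 1 * jhat G (delE i) (a i) x (b i) + k * phi x.
have harm x' : outcurrent G (@allE m) s x' = 0.
  rewrite outcurrentDl (outcurrent_delE i) hu phi_current u0 (jhat_source _ _ del_conn) -/(Ri G i) /k.
  by field; rewrite gt_eqF.
have := harmonic_const all_conn harm x (a i).
rewrite /s u0 !mul1r add0r => h; apply: (addIr (k * phi x)); rewrite h; ring.
Qed.

Lemma Ri_potential : Ri G i = k * (phi (a i) - phi (b i)).
Proof. by rewrite -jhat_delE_potential (jhat_source _ _ del_conn). Qed.

Lemma len_addRi : len G i + Ri G i = len G i * k.
Proof. by rewrite /k; field; rewrite gt_eqF. Qed.

Lemma k_neq0 : k != 0.
Proof.
have : 0 <= Ri G i / len G i.
  by rewrite divr_ge0 ?(resist_ge0 _ _ del_conn) // ltW.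
by rewrite /k => ?; apply: lt0r_neq0; lra.
Qed.

Lemma coef_nonbridge :
  Ri G i / (len G i + Ri G i) = (phi (a i) - phi (b i)) / len G i.
Proof.
rewrite len_addRi Ri_potential; field.
by rewrite k_neq0 gt_eqF.
Qed.

Lemma term1_nonbridge p :
  len G i * (Ra G i p - Rb G i p) ^+ 2 / (len G i + Ri G i) ^+ 2 =
    (2 * phi p - phi (a i) - phi (b i)) ^+ 2 / len G i.
Proof.
have -> : Rb G i p = Ri G i - Ra G i p.
  by rewrite /Rb /Ra /Ri -(jhat_addC _ _ del_conn p); ring.
rewrite /Ra jhat_delE_potential len_addRi Ri_potential; field.
by rewrite k_neq0 gt_eqF.
Qed.

End NonBridge.

Section Bridge.
Hypothesis del_disconn : ~ connectedb G (delE i).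

Let side z := connect (adj G (delE i)) (a i) z.

Lemma bridge_side_potential z :
  phi z - phi (b i) = (if side z then len G i else 0).
Proof.
have nab : ~~ side (b i) by apply/negP => /(connectedb_delE all_conn).
pose phi' z := if side z then len G i else 0.
have side_edge j : j != i -> side (a j) = side (b j).
  move=> ji; have ej : adj G (delE i) (a j) (b j).
    by apply/existsP; exists j; rewrite /delE ji !eqxx.
  apply/idP/idP => h; apply: connect_trans h (connect1 _) => //.
  by rewrite adj_sym.
have phi'_current x :
    outcurrent G (@allE m) phi' x = (x == a i)%:R - (x == b i)%:R.
  rewrite (outcurrent_delE i) outcurrentE big1 ?add0r => [|j /side_edge];
    last by rewrite /phi' => ->; rewrite subrr mulr0 mul0r.
  by rewrite /phi' (negbTE nab) /side connect0; field; exact: lt0r_neq0.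
have := @harmonic_diff _ all_conn phi phi' _ z (b i).
rewrite /phi' (negbTE nab) subr0 => <-; first ring.
by move=> x; rewrite phi_current phi'_current.
Qed.

Lemma coef_bridge :
  lim ((fun t : R => t / (len G i + t)) @ +oo)%classic =
    (phi (a i) - phi (b i)) / len G i.
Proof.
have := bridge_side_potential (a i); rewrite /side connect0 => ->.
by rewrite lim_ratio_pinfty // divff // gt_eqF.
Qed.

Lemma term1_bridge p :
  lim ((fun t : R => len G i * (Ra_br G i p t - Rb_br G i p t) ^+ 2
                      / (len G i + t) ^+ 2) @ +oo)%classic =
    (2 * phi p - phi (a i) - phi (b i)) ^+ 2 / len G i.
Proof.
have L0 := len_gt0 i.
have -> : (fun t => len G i * (Ra_br G i p t - Rb_br G i p t) ^+ 2 / (len G i + t) ^+ 2)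
    = (fun t => len G i * (t / (len G i + t)) ^+ 2).
  by apply/funext => t; rewrite /Ra_br /Rb_br expr_div_n mulrA; case: ifP => _; ring.
rewrite lim_sqr_ratio_pinfty //.
have -> : 2 * phi p - phi (a i) - phi (b i) =
  2 * (phi p - phi (b i)) - (phi (a i) - phi (b i)) by ring.
have := bridge_side_potential (a i); rewrite /side connect0 => ->.
by rewrite bridge_side_potential /side; case: ifP => _; field; rewrite gt_eqF.
Qed.
End Bridge.

Lemma term1_potential p :
  term1 G i p = (2 * phi p - phi (a i) - phi (b i)) ^+ 2 / len G i.
Proof.
rewrite /term1; case: asboolP => hc.
  exact: term1_nonbridge.
exact: term1_bridge.
Qed.

Lemma coef_potential : coef G i = (phi (a i) - phi (b i)) / len G i.
Proof.
rewrite /coef; case: asboolP => hc.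
  exact: coef_nonbridge.
exact: coef_bridge.
Qed.
End EdgeTerms.

Section GreenFunction.
Hypothesis all_conn : connectedb G (@allE m).

Definition is_green_fun (y : 'I_n) (f : 'I_n -> R) : Prop :=
  (forall x, outcurrent G (@allE m) f x = (x == y)%:R - n%:R^-1) /\ \sum_x f x = 0.

Definition green_fun (y : 'I_n) : 'I_n -> R :=
  epsilon (inhabits (fun=> 0)) (is_green_fun y).

Lemma green_funP y : is_green_fun y (green_fun y).
Proof.
apply: epsilon_spec.
have n0 : n%:R != 0 :> R := natr_ord_neq0 y.
have [u hu] : exists u, forall x,
    outcurrent G (@allE m) u x = (x == y)%:R - n%:R^-1.
  apply: outcurrent_onto all_conn _ _.
  by rewrite sumrB sum_delta sumr_const_ord mulfV // subrr.
exists (fun z => u z - n%:R^-1 * \sum_x u x); split.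
  by move=> x; rewrite outcurrent_addr.
by rewrite sumrB sumr_const_ord mulrA mulfV // mul1r subrr.
Qed.

Local Notation g := green_fun.

Lemma outcurrent_green_fun y x :
  outcurrent G (@allE m) (g y) x = (x == y)%:R - n%:R^-1.
Proof. exact: (green_funP y).1. Qed.

Lemma sum_green_fun y : \sum_x g y x = 0.
Proof. exact: (green_funP y).2. Qed.

Lemma dirichlet_green_fun y f :
  dirichlet (@allE m) (g y) f = f y - n%:R^-1 * \sum_x f x.
Proof.
rewrite -green_identity; under eq_bigr do rewrite outcurrent_green_fun mulrBl.
by rewrite sumrB sumr_delta mulr_sumr.
Qed.

Lemma green_fun_sym y z : g y z = g z y.
Proof.
have := dirichlet_green_fun y (g z); rewrite sum_green_fun mulr0 subr0 => <-.
have := dirichlet_green_fun z (g y); rewrite sum_green_fun mulr0 subr0 => <-.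
by apply: eq_bigr => j _; ring.
Qed.

Lemma r_green_fun x y : r G x y = g x x + g y y - 2 * g x y.
Proof.
have [v0 hv] := jhat_voltage all_conn y x.
have same_current z : outcurrent G (@allE m) (fun z => jhat G (@allE m) y z x) z =
    outcurrent G (@allE m) (fun z => 1 * g x z + (-1) * g y z) z.
  by rewrite hv outcurrentDl !outcurrent_green_fun; ring.
have := harmonic_diff all_conn same_current x y.
by rewrite /r /resist v0 (green_fun_sym y x); lra.
Qed.

Lemma sum_r_green_fun x : \sum_w r G x w = n%:R * g x x + \sum_z g z z.
Proof.
under eq_bigr do rewrite r_green_fun.
rewrite sumrB big_split /= sumr_const_ord -mulr_sumr sum_green_fun.
by rewrite mulr0 subr0.
Qed.

Lemma Kf_green_fun : 4 * Kf G = 4 * n%:R * \sum_z g z z.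
Proof.
rewrite /Kf; under eq_bigr do rewrite sum_r_green_fun.
by rewrite big_split /= -mulr_sumr sumr_const_ord; field.
Qed.

Lemma sum_resist_edges f :
  \sum_(i < m) r G (a i) (b i) * (f (a i) + f (b i)) / len G i =
    2 * (1 - n%:R^-1) * \sum_x f x - dirichlet (@allE m) (fun z => g z z) f.
Proof.
have diag : \sum_x outcurrent G (@allE m) (g x) x * f x = (1 - n%:R^-1) * \sum_x f x.
  by under eq_bigr do rewrite outcurrent_green_fun eqxx; rewrite mulr_sumr.
rewrite -mulrA -diag sum_outcurrent_mul /dirichlet !mulr_sumr -sumrB.
by apply: eq_bigr => i _; rewrite r_green_fun (green_fun_sym (b i)); ring.
Qed.

Lemma outcurrent_green_funB y z x :
  outcurrent G (@allE m) (fun w => g y w - g z w) x = (x == y)%:R - (x == z)%:R.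
Proof.
have := outcurrentDl (@allE m) (g y) (g z) 1 (-1) x.
by rewrite !outcurrent_green_fun; under eq_fun do rewrite mul1r mulN1r; move=> ->; ring.
Qed.

Lemma sum_term1_green_fun p : \sum_(i < m) term1 G i p =
  4 * n%:R^-1 * \sum_z g z z + dirichlet (@allE m) (fun z => g z z) (fun z => g z z).
Proof.
have h_expand : \sum_(i < m) term1 G i p =
    4 * dirichlet (@allE m) (g p) (g p) - 4 * dirichlet (@allE m) (g p) (fun z => g z z)
    + dirichlet (@allE m) (fun z => g z z) (fun z => g z z).
  rewrite /dirichlet !mulr_sumr -sumrB -big_split /=; apply: eq_bigr => i _.
  rewrite (term1_potential all_conn (outcurrent_green_funB _ _)).
  by rewrite !(green_fun_sym _ p) (green_fun_sym (b i)); ring.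
by rewrite h_expand !dirichlet_green_fun sum_green_fun; ring.
Qed.

Lemma coef_green_fun i : coef G i = r G (a i) (b i) / len G i.
Proof.
rewrite (coef_potential all_conn (outcurrent_green_funB _ _)) r_green_fun.
by rewrite (green_fun_sym (b i)); congr (_ / _); ring.
Qed.

Lemma sum_coef_r_green_fun : \sum_(i < m) coef G i * \sum_w (r G (a i) w + r G (b i) w) =
    n%:R * \sum_(i < m) r G (a i) (b i) * (g (a i) (a i) + g (b i) (b i)) / len G i
    + (\sum_z g z z) * \sum_(i < m) r G (a i) (b i) * (1 + 1) / len G i.
Proof.
rewrite !mulr_sumr -big_split; apply: eq_bigr => i _.
by rewrite big_split /= !sum_r_green_fun coef_green_fun; ring.
Qed.
End GreenFunction.
End Network.

Theorem lemma3p4 (R : realType) (n m : nat) (G : mgraph R n m)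
  (hlen : forall i : 'I_m, 0 < len G i)
  (hconn : connectedb G (@allE m))
  (p : 'I_n) :
  4 * Kf G =
    n%:R * (\sum_(i < m) term1 G i p)
  + \sum_(i < m) (coef G i *
        \sum_(w < n) (r G (eP G i) w + r G (eQ G i) w)).
Proof.
have n0 : n%:R != 0 :> R := natr_ord_neq0 p.
rewrite (Kf_green_fun hlen hconn) (sum_term1_green_fun hlen hconn).
rewrite (sum_coef_r_green_fun hlen hconn) (sum_resist_edges hlen hconn (fun=> 1)).
rewrite (sum_resist_edges hlen hconn (fun z => green_fun G z z)).
by rewrite dirichlet_cstr sumr_const_ord; field.
Qed.
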